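(* Let $X$ be a set and let $\mathcal{L}$ be a nest on $X$. Then $\mathcal{L}$ is interlocking if and only if, for each $L \in \mathcal{L}$ such that $L$ is closed in the Alexandroff topology determined by $\triangleleft_{\mathcal{L}}$, the set $X-L$ is closed in the Alexandroff topology determined by $\triangleleft_{\mathcal{L}^c}$.
   Context: A nest on $X$ is a family $\mathcal{L}$ of subsets of $X$ such that for all $M,N\in\mathcal{L}$, either $M\subseteq N$ or $N\subseteq M$. For a family $\mathcal{S}$ of subsets of $X$, define the relation $x \triangleleft_{\mathcal{S}} y$ iff there exists $S\in\mathcal{S}$ with $x\in S$ and $y\notin S$. Let $\mathcal{L}^c=\{X-L : L\in\mathcal{L}\}$. A family $\mathcal{S}$ of subsets of $X$ is interlocking if for every $T\in\mathcal{S}$ with $T=\bigcap\{S : T\subseteq S,\ S\in\mathcal{S}-\{T\}\}$ one has $T=\bigcup\{S : S\subseteq T,\ S\in\mathcal{S}-\{T\}\}$. For a relation $\triangleleft$ on $X$ and $A\subseteq X$, let ${\uparrow}A=\{x\in X : \exists y\in A,\ y\triangleleft x\}$. The Alexandroff topology determined by $\triangleleft$ is the family $\{U\subseteq X : U={\uparrow}U\}$ (these are the open sets); a set is closed if its complement is open. *)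

From mathcomp Require Import all_boot.
From mathcomp Require Import boolp classical_sets.
Set Implicit Arguments. Unset Strict Implicit. Unset Printing Implicit Defensive.
Local Open Scope classical_set_scope.

Definition nest (T : Type) (L : set (set T)) : Prop :=
  forall M N, L M -> L N -> M `<=` N \/ N `<=` M.

Definition tri (T : Type) (S : set (set T)) (x y : T) : Prop :=
  exists2 A, S A & (A x /\ ~ A y).

Definition compl_fam (T : Type) (L : set (set T)) : set (set T) :=
  [set B | exists2 A, L A & B = ~` A].

(* Interlocking family. Intersection over an empty subfamily is X (setT). *)
Definition interlocking (T : Type) (S : set (set T)) : Prop :=
  forall T0, S T0 ->
    T0 = \bigcap_(A in [set A | S A /\ T0 `<=` A /\ A <> T0]) A ->
    T0 = \bigcup_(A in [set A | S A /\ A `<=` T0 /\ A <> T0]) A.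

Definition up (T : Type) (r : T -> T -> Prop) (A : set T) : set T :=
  [set x | exists2 y, A y & r y x].

Definition alex_open (T : Type) (r : T -> T -> Prop) (U : set T) : Prop :=
  U = up r U.

Definition alex_closed (T : Type) (r : T -> T -> Prop) (C : set T) : Prop :=
  alex_open r (~` C).

From mathcomp Require Import all_boot.
From mathcomp Require Import boolp classical_sets.
Set Implicit Arguments.
Unset Strict Implicit.
Local Open Scope classical_set_scope.

(* A point lies in the up-set of U for the relation of a family S exactly
   when it misses some member of S meeting U.  In a nest L, the members
   meeting X - A (A in L) are the proper supersets of A, and those whose
   complement meets A are its proper subsets.  So A is closed for the relation
   of L iff A is the intersection of its proper supersets in L, and X - A is
   closed for the relation of L^c iff A is the union of its proper subsets:
   these are exactly the hypothesis and conclusion of the interlocking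
   condition at A. *)

Definition proper_supsets (T : Type) (L : set (set T)) (A : set T) :=
  [set B | L B /\ A `<=` B /\ B <> A].

Definition proper_subsets (T : Type) (L : set (set T)) (A : set T) :=
  [set B | L B /\ B `<=` A /\ B <> A].

Lemma tri_compl_fam (T : Type) (L : set (set T)) (x y : T) :
  tri (compl_fam L) x y <-> tri L y x.
Proof.
split=> [[_ [B LB ->] [nBx /contrapT By]] | [B LB [By nBx]]].
  by exists B.
by exists (~` B); [exists B | split=> //= /(_ By)].
Qed.

Lemma up_tri (T : Type) (S : set (set T)) (U : set T) :
  up (tri S) U = \bigcup_(B in [set B | S B /\ B `&` U !=set0]) ~` B.
Proof.
apply/seteqP; split=> x.
  by move=> [y Uy [B SB [By nBx]]]; exists B => //; split=> //; exists y.
by move=> [B [SB [y [By Uy]]] nBx]; exists y => //; exists B.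
Qed.

Lemma up_tri_compl_fam (T : Type) (L : set (set T)) (U : set T) :
  up (tri (compl_fam L)) U = \bigcup_(B in [set B | L B /\ ~` B `&` U !=set0]) B.
Proof.
apply/seteqP; split=> x.
  move=> [y Uy /tri_compl_fam [B LB [Bx nBy]]].
  by exists B => //; split=> //; exists y.
by move=> [B [LB [y [nBy Uy]]] Bx]; exists y => //; apply/tri_compl_fam; exists B.
Qed.

Lemma nest_meets_setC (T : Type) (L : set (set T)) (A B : set T) :
  nest L -> L A -> L B ->
  B `&` ~` A !=set0 <-> A `<=` B /\ B <> A.
Proof.
move=> nestL LA LB; split=> [BnA | [AB BA]].
  have nBA : ~ B `<=` A by case: BnA => x [Bx nAx] /(_ x Bx).
  case: (nestL _ _ LA LB) => // AB; split=> // eqBA.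
  by apply: nBA; rewrite eqBA.
apply: nonsubset => BA'; apply: BA.
by apply/seteqP; split.
Qed.

Section NestMember.
Variables (T : Type) (L : set (set T)) (A : set T).
Hypotheses (nestL : nest L) (LA : L A).

Lemma proper_supsetsE :
  [set B | L B /\ B `&` ~` A !=set0] = proper_supsets L A.
Proof.
by apply/seteqP; split=> B [LB HB]; split=> //; apply/(nest_meets_setC nestL LA LB).
Qed.

Lemma proper_subsetsE :
  [set B | L B /\ ~` B `&` A !=set0] = proper_subsets L A.
Proof.
apply/seteqP; split=> B [LB HB]; split=> //.
  by move: HB; rewrite setIC => /(nest_meets_setC nestL LB LA) [? /nesym].
by rewrite setIC; apply/(nest_meets_setC nestL LB LA); case: HB => ? /nesym.
Qed.

Lemma nest_alex_closedP :
  alex_closed (tri L) A <-> A = \bigcap_(B in proper_supsets L A) B.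
Proof.
rewrite /alex_closed /alex_open up_tri proper_supsetsE -setC_bigcap.
split=> eqA; last by rewrite {1}eqA.
by have := congr1 setC eqA; rewrite !setCK.
Qed.

Lemma nest_alex_closed_setCP :
  alex_closed (tri (compl_fam L)) (~` A) <-> A = \bigcup_(B in proper_subsets L A) B.
Proof.
by rewrite /alex_closed /alex_open setCK up_tri_compl_fam proper_subsetsE.
Qed.

End NestMember.

Theorem theorem3p4 (T : Type) (L : set (set T)) :
  nest L ->
  (interlocking L <->
   (forall A, L A -> alex_closed (tri L) A ->
      alex_closed (tri (compl_fam L)) (~` A))).
Proof.
move=> nestL; split=> H A LA /(nest_alex_closedP nestL LA) /(H A LA).
all: by move/(nest_alex_closed_setCP nestL LA).
Qed.
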